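(* Let $m\ge 2$ be even and $n$ a multiple of $m/2$. If $S\subseteq\{0,1\}^n$ is a set of mutually incomparable solutions with respect to $m$-LOTZ, then $|S|\le(2n/m+1)^{m-1}$.
   Context: $m$-LOTZ: $\{0,1\}^n\to\mathbb N_0^m$ is defined by splitting $x$ into $m/2$ consecutive blocks of length $2n/m$; for block $k\in[m/2]$ (bits $x_{(k-1)2n/m+1},\dots,x_{k\cdot 2n/m}$), $f_{2k-1}(x)$ is the number of leading ones of the block (length of its longest all-ones prefix) and $f_{2k}(x)$ is the number of trailing zeros of the block (length of its longest all-zeros suffix). All objectives are maximized. $x\succeq y$ iff $f_j(x)\ge f_j(y)$ for all $j$; $x,y$ are incomparable if neither $x\succeq y$ nor $y\succeq x$; $S$ is a set of mutually incomparable solutions if any two distinct elements of $S$ are incomparable. *)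

From mathcomp Require Import all_boot.
Set Implicit Arguments. Unset Strict Implicit. Unset Printing Implicit Defensive.

(* Bit strings of length n: n.-tuple bool (bit i = x`_i, 0-indexed). *)

Definition leading_ones (s : seq bool) : nat := find negb s.
Definition trailing_zeros (s : seq bool) : nat := find id (rev s).

(* block length 2n/m = n / (m/2) *)
Definition blen (m n : nat) : nat := n %/ m./2.

Definition block (m n : nat) (x : n.-tuple bool) (k : nat) : seq bool :=
  take (blen m n) (drop (k * blen m n) x).

Definition mLOTZ (m n : nat) (x : n.-tuple bool) (j : nat) : nat :=
  if odd j then trailing_zeros (block m x j./2)
  else leading_ones (block m x j./2).

Definition dominates (m n : nat) (x y : n.-tuple bool) : Prop :=
  forall j : 'I_m, mLOTZ m y j <= mLOTZ m x j.

Definition incomparable (m n : nat) (x y : n.-tuple bool) : Prop :=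
  ~ dominates m x y /\ ~ dominates m y x.

Definition mutually_incomparable (m n : nat) (S : {set n.-tuple bool}) : Prop :=
  forall x y, x \in S -> y \in S -> x != y -> incomparable m x y.

From mathcomp Require Import all_boot.
From mathcomp Require Import zify.

(* Two objective vectors that agree on all but one coordinate are comparable,
   so on a mutually incomparable set the first [m - 1] objectives already
   determine a solution.  Each objective lies in [0, 2n/m], which leaves at
   most [(2n/m + 1)^(m - 1)] possible values for these [m - 1] objectives. *)

Lemma card_le_of_injective_code (T : finType) (A : {set T}) (k b : nat)
    (code : T -> nat -> nat) :
  (forall x j, code x j <= b) ->
  {in A &, forall x y, (forall j, j < k -> code x j = code y j) -> x = y} ->
  #|A| <= b.+1 ^ k.
Proof.
move=> code_le code_inj.
pose F x : {ffun 'I_k -> 'I_b.+1} := [ffun j : 'I_k => inord (code x j)].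
have F_inj : {in A &, injective F}.
  move=> x y xA yA /ffunP Fxy; apply: code_inj => // j jk.
  have := congr1 val (Fxy (Ordinal jk)).
  by rewrite !ffunE /= !inordK // ltnS code_le.
rewrite -(card_in_imset F_inj); apply: leq_trans (max_card _) _.
by rewrite card_ffun !card_ord.
Qed.

Lemma le_or_ge_of_eq_but_one (m k : nat) (f g : nat -> nat) :
  (forall j, j < m -> j != k -> f j = g j) ->
  (forall j, j < m -> f j <= g j) \/ (forall j, j < m -> g j <= f j).
Proof.
move=> fg; have [fk_le | gk_lt] := leqP (f k) (g k); [left | right].
  by move=> j jm; case: (eqVneq j k) => [-> // | jk]; rewrite fg.
move=> j jm; case: (eqVneq j k) => [-> | jk]; first exact: ltnW.
by rewrite fg.
Qed.

Lemma leading_ones_le_size (s : seq bool) : leading_ones s <= size s.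
Proof. exact: find_size. Qed.

Lemma trailing_zeros_le_size (s : seq bool) : trailing_zeros s <= size s.
Proof. by rewrite -size_rev; apply: find_size. Qed.

Lemma mLOTZ_le_blen (m n : nat) (x : n.-tuple bool) (j : nat) :
  mLOTZ m x j <= blen m n.
Proof.
have size_block : size (block m x j./2) <= blen m n.
  by rewrite size_take_min geq_minl.
rewrite /mLOTZ; case: ifP => _; apply: leq_trans size_block.
  exact: trailing_zeros_le_size.
exact: leading_ones_le_size.
Qed.

Lemma blen_even (m n : nat) : ~~ odd m -> (2 * n) %/ m = blen m n.
Proof.
move=> m_even; have m_double : m = 2 * m./2.
  by rewrite -{1}(odd_double_half m) (negbTE m_even) add0n -mul2n.
by rewrite /blen {1}m_double divnMl.
Qed.

Lemma mutually_incomparable_eq_init (m n : nat) (S : {set n.-tuple bool}) :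
  mutually_incomparable m S ->
  {in S &, forall x y,
    (forall j, j < m - 1 -> mLOTZ m x j = mLOTZ m y j) -> x = y}.
Proof.
move=> S_inc x y xS yS init_eq; apply/eqP; apply: contraT => x_ne_y.
have [not_xy not_yx] := S_inc x y xS yS x_ne_y.
have agree_but_last j : j < m -> j != m - 1 -> mLOTZ m x j = mLOTZ m y j.
  by move=> jm j_ne; apply: init_eq; lia.
have [xy | yx] := @le_or_ge_of_eq_but_one _ _ _ _ agree_but_last.
  by case: not_yx => j; apply: xy.
by case: not_xy => j; apply: yx.
Qed.

Theorem lemma5 (m n : nat) (S : {set n.-tuple bool}) :
  2 <= m -> ~~ odd m -> (m./2 %| n) ->
  mutually_incomparable m S ->
  #|S| <= ((2 * n) %/ m).+1 ^ (m - 1).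
Proof.
move=> _ m_even _ S_inc; rewrite blen_even //.
apply: (@card_le_of_injective_code _ S _ _ (@mLOTZ m n)).
  exact: mLOTZ_le_blen.
exact: mutually_incomparable_eq_init.
Qed.
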